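(* Let $k=\mathbb{Q}(a_1,a_2,a_3,a_4)$ with $a_i$ indeterminates, $P=X^4+a_1X^3+a_2X^2+a_3X+a_4\in k[X]$, and let $Q=b_0X^3+b_1X^2+b_2X+b_3$ be the remainder of the Euclidean division of $P'^2$ by $P$. If $x_1,\dots,x_4$ are the roots of $P$ (in an algebraic closure of $k$), then the three roots of $Q$ are $$\frac{x_1x_2-x_3x_4}{x_1+x_2-x_3-x_4},\quad \frac{x_1x_3-x_2x_4}{x_1+x_3-x_2-x_4},\quad \frac{x_1x_4-x_2x_3}{x_1+x_4-x_2-x_3}.$$
   Context: $P'$ denotes the derivative of $P$ with respect to $X$. *)

From HB Require Import structures.
From mathcomp Require Import all_boot all_algebra.
From mathcomp Require Import fraction.
From mathcomp Require Import mpoly.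
Set Implicit Arguments. Unset Strict Implicit. Unset Printing Implicit Defensive.
Import GRing.Theory.
Local Open Scope ring_scope.

Definition k : fieldType := {fraction {mpoly rat[4]}}.

(* the indeterminate a_(i+1) in k, i : 'I_4 *)
Definition a (i : 'I_4) : k := tofrac ('X_i : {mpoly rat[4]}).

Definition P : {poly k} :=
  'X^4 + (a 0)%:P * 'X^3 + (a 1)%:P * 'X^2 + (a 2)%:P * 'X + (a 3)%:P.

Definition Q : {poly k} := (P^`() ^+ 2) %% P.

Definition root_candidates (L : fieldType) (x : 'I_4 -> L) : seq L :=
  [:: (x 0 * x 1 - x 2 * x 3) / (x 0 + x 1 - x 2 - x 3);
      (x 0 * x 2 - x 1 * x 3) / (x 0 + x 2 - x 1 - x 3);
      (x 0 * x 3 - x 1 * x 2) / (x 0 + x 3 - x 1 - x 2)].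

From HB Require Import structures.
From mathcomp Require Import all_boot all_algebra.
From mathcomp Require Import fraction mpoly.
From mathcomp Require Import ring.
Import GRing.Theory.
Local Open Scope ring_scope.

(* Over any field, P'^2 = (16 X^2 + 8 c1 X + c1^2) P + R for the monic quartic
   P = X^4 + c1 X^3 + c2 X^2 + c3 X + c4, with an explicit cubic R.  When P
   splits with roots x_i, R factors as the product of the three linear
   polynomials (x_i + x_j - x_k - x_l) X - (x_i x_j - x_k x_l), so its leading
   coefficient b0 = - c1^3 + 4 c1 c2 - 8 c3 is the product of the three
   denominators.  For the generic quartic, b0 = - a1^3 + 4 a1 a2 - 8 a3 is a
   nonzero polynomial in the indeterminates, so the denominators are nonzero
   and the linear factors can be made monic. *)

Definition b0 {R : comPzRingType} (c1 c2 c3 : R) : R :=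
  - c1 ^+ 3 + 4 * c1 * c2 - 8 * c3.

Lemma rmorph_b0 {R S : comPzRingType} (f : {rmorphism R -> S}) (c1 c2 c3 : R) :
  f (b0 c1 c2 c3) = b0 (f c1) (f c2) (f c3).
Proof.
by rewrite /b0 !(rmorphXn, rmorphMn, rmorph1, rmorphN, rmorphB, rmorphD, rmorphM).
Qed.

Section Quartic.

Variable L : fieldType.

Definition quartic (c1 c2 c3 c4 : L) : {poly L} :=
  'X^4 + c1%:P * 'X^3 + c2%:P * 'X^2 + c3%:P * 'X + c4%:P.

Definition rem_deriv_sqr (c1 c2 c3 c4 : L) : {poly L} :=
  Poly [:: c3 ^+ 2 - c1 ^+ 2 * c4;
           4 * c2 * c3 - 8 * c1 * c4 - c1 ^+ 2 * c3;
           - 2 * c1 * c3 + 4 * c2 ^+ 2 - 16 * c4 - c1 ^+ 2 * c2;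
           b0 c1 c2 c3].

Lemma coef3_rem_deriv_sqr (c1 c2 c3 c4 : L) :
  (rem_deriv_sqr c1 c2 c3 c4)`_3 = b0 c1 c2 c3.
Proof. by rewrite coef_Poly. Qed.

Lemma modp_deriv_sqr_quartic (c1 c2 c3 c4 : L) :
  (quartic c1 c2 c3 c4)^`() ^+ 2 %% quartic c1 c2 c3 c4 =
  rem_deriv_sqr c1 c2 c3 c4.
Proof.
set p := quartic c1 c2 c3 c4; set r := rem_deriv_sqr c1 c2 c3 c4.
have -> : p^`() ^+ 2 = ('X^2 *+ 16 + (c1%:P * 'X) *+ 8 + (c1 ^+ 2)%:P) * p + r.
  by rewrite /p /r /rem_deriv_sqr /quartic /b0 /= !cons_poly_def !derivE; ring.
have size_r : (size r <= 4)%N by exact: size_Poly.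
have size_p : size p = 5%N.
  have -> : p = 'X^4 + Poly [:: c4; c3; c2; c1].
    by rewrite /p /quartic /= !cons_poly_def; ring.
  by rewrite size_polyDl size_polyXn //; apply: leq_ltn_trans (size_Poly _) _.
by rewrite modp_addl_mul_small // size_p.
Qed.

Variable x : 'I_4 -> L.

Let e1 := x 0 + x 1 + x 2 + x 3.
Let e2 := x 0 * x 1 + x 0 * x 2 + x 0 * x 3 + x 1 * x 2 + x 1 * x 3 + x 2 * x 3.
Let e3 := x 0 * x 1 * x 2 + x 0 * x 1 * x 3 + x 0 * x 2 * x 3 + x 1 * x 2 * x 3.
Let e4 := x 0 * x 1 * x 2 * x 3.

Lemma prod_XsubC_quartic :
  \prod_(i < 4) ('X - (x i)%:P) = quartic (- e1) e2 (- e3) e4.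
Proof.
have -> : \prod_(i < 4) ('X - (x i)%:P) =
    ('X - (x 0)%:P) * ('X - (x 1)%:P) * ('X - (x 2)%:P) * ('X - (x 3)%:P).
  rewrite !big_ord_recr big_ord0 /= mul1r.
  by congr (_ * _ * _ * _); congr ('X - (x _)%:P); apply: val_inj.
by rewrite /quartic /e1 /e2 /e3 /e4; ring.
Qed.

Lemma b0_roots :
  b0 (- e1) e2 (- e3) = (x 0 + x 1 - x 2 - x 3) * (x 0 + x 2 - x 1 - x 3)
                        * (x 0 + x 3 - x 1 - x 2).
Proof. by rewrite /b0 /e1 /e2 /e3; ring. Qed.

Definition resolvent_factor (i j k l : 'I_4) : {poly L} :=
  (x i + x j - x k - x l)%:P * 'X - (x i * x j - x k * x l)%:P.

Lemma rem_deriv_sqr_roots :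
  rem_deriv_sqr (- e1) e2 (- e3) e4 =
  resolvent_factor 0 1 2 3 * resolvent_factor 0 2 1 3 * resolvent_factor 0 3 1 2.
Proof.
by rewrite /rem_deriv_sqr /resolvent_factor /b0 /= !cons_poly_def /e1 /e2 /e3 /e4; ring.
Qed.

Lemma modp_deriv_sqr_prod_XsubC (p := \prod_(i < 4) ('X - (x i)%:P)) :
  p^`() ^+ 2 %% p =
  resolvent_factor 0 1 2 3 * resolvent_factor 0 2 1 3 * resolvent_factor 0 3 1 2.
Proof. by rewrite /p prod_XsubC_quartic modp_deriv_sqr_quartic rem_deriv_sqr_roots. Qed.

Lemma coef3_resolvent_factors :
  (resolvent_factor 0 1 2 3 * resolvent_factor 0 2 1 3 * resolvent_factor 0 3 1 2)`_3
  = (x 0 + x 1 - x 2 - x 3) * (x 0 + x 2 - x 1 - x 3) * (x 0 + x 3 - x 1 - x 2).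
Proof. by rewrite -rem_deriv_sqr_roots coef3_rem_deriv_sqr b0_roots. Qed.

End Quartic.

Arguments quartic {L}.
Arguments rem_deriv_sqr {L}.
Arguments resolvent_factor {L}.

Lemma linear_scale_monic (L : fieldType) (c n : L) :
  c != 0 -> c%:P * 'X - n%:P = c *: ('X - (n / c)%:P).
Proof. by move=> c_neq0; rewrite scalerBr -!mul_polyC -polyCM [c * _]mulrC divfK. Qed.

Lemma b0_generic_neq0 : b0 (a 0) (a 1) (a 2) != 0.
Proof.
rewrite /a -rmorph_b0 tofrac_eq0; apply: contraTneq isT.
(* evaluate at a_1 = a_2 = 0, a_3 = 1 *)
move=> /(congr1 (meval (fun i : 'I_4 => if i == 2 :> nat then 1 else 0 : rat))).
rewrite meval0 (rmorph_b0 (meval _)) /= !mevalXU /=.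
by move/eqP.
Qed.

Theorem proposition2 (L : closedFieldType) (f : {rmorphism k -> L})
    (x : 'I_4 -> L) :
  map_poly f P = \prod_(i < 4) ('X - (x i)%:P) ->
  map_poly f Q = f (Q`_3) *: \prod_(r <- root_candidates x) ('X - r%:P).
Proof.
move=> fP.
have fQ : map_poly f Q = resolvent_factor x 0 1 2 3 * resolvent_factor x 0 2 1 3
                         * resolvent_factor x 0 3 1 2.
  by rewrite /Q map_modp rmorphXn /= -deriv_map fP modp_deriv_sqr_prod_XsubC.
have Q3_neq0 : Q`_3 != 0.
  by rewrite /Q modp_deriv_sqr_quartic coef3_rem_deriv_sqr b0_generic_neq0.
have := Q3_neq0; rewrite -(fmorph_eq0 f) -coef_map fQ coef3_resolvent_factors.
rewrite !mulf_eq0 !negb_or => /andP [/andP [d1_neq0 d2_neq0] d3_neq0].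
rewrite /resolvent_factor /root_candidates !big_cons big_nil mulr1.
rewrite !linear_scale_monic // -!mul_polyC !polyCM.
by ring.
Qed.
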